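(* Let $R$ be a commutative Noetherian ring of prime characteristic $p$ and suppose $c$ is a $p^{w_0}$-weak test element for $R$ for some $w_0\in\mathbb{N}_0$. For each ideal $\mathfrak{a}$ of $R$ let $G(\mathfrak{a})=\bigoplus_{n\ge0}R/(\mathfrak{a}^{[p^n]})^F$ be the graded left $R[x,f]$-module with $x(r+(\mathfrak{a}^{[p^n]})^F)=r^p+(\mathfrak{a}^{[p^{n+1}]})^F$, and let $G:=\bigoplus_{\mathfrak{a}}G(\mathfrak{a})$ over all ideals $\mathfrak{a}$ of $R$ (an $x$-torsion-free module). Let $U:=\bigoplus_{\mathfrak{a}}\bigoplus_{n\ge0}(\mathfrak{a}^{[p^n]})^*/(\mathfrak{a}^{[p^n]})^F$. Then (i) $U=\operatorname{ann}_G(\bigoplus_{n\ge0}Rcx^n)$, so $U$ is a special annihilator submodule of $G$; (ii) if $\mathfrak{b}$ is the $G$-special $R$-ideal with $\operatorname{grann}_{R[x,f]}U=\bigoplus_{n\ge0}\mathfrak{b}x^n$, then $\mathfrak{b}$ is the smallest member of $\mathcal{I}(G)$ of positive height.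
   Context: $R[x,f]$ is the Frobenius skew polynomial ring: free left $R$-module on $(x^i)_{i\ge0}$, $xr=r^px$. The Frobenius closure is $\mathfrak{a}^F=\{r: r^{p^n}\in\mathfrak{a}^{[p^n]}\text{ for some }n\}$, where $\mathfrak{a}^{[p^n]}$ is generated by $p^n$-th powers. $\operatorname{ann}_G\mathfrak{B}$, for a graded two-sided ideal $\mathfrak{B}=\bigoplus\mathfrak{b}_nx^n$ ($(\mathfrak{b}_n)$ ascending), is the set of elements killed by $\mathfrak{B}$; special annihilator submodules are those of this form. $\operatorname{grann}N$ is the set of $\sum r_ix^i$ with each $r_ix^i$ annihilating $N$. An ideal $\mathfrak{b}$ is $G$-special if $\operatorname{grann}N=\bigoplus_n\mathfrak{b}x^n$ for some submodule $N$; $\mathcal{I}(G)$ is the set of these; $R$ has infinite height. $R^\circ$, tight closure $\mathfrak{a}^*$ as usual. A $p^{w_0}$-weak test element is $c\in R^\circ$ such that for every ideal $\mathfrak{b}$ and $r\in R$: $r\in\mathfrak{b}^*$ iff $cr^{p^n}\in\mathfrak{b}^{[p^n]}$ for all $n\ge w_0$. *)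

From Stdlib Require List.
From HB Require Import structures.
From mathcomp Require Import all_boot all_order all_algebra.
Set Implicit Arguments. Unset Strict Implicit. Unset Printing Implicit Defensive.
Import GRing.Theory.
Local Open Scope ring_scope.

Section FrobeniusDefs.
Variable R : comNzRingType.

Definition is_ideal (I : R -> Prop) : Prop :=
  [/\ I 0, (forall x y, I x -> I y -> I (x + y)) & (forall r x, I x -> I (r * x))].

Definition noetherian : Prop :=
  forall I : nat -> R -> Prop, (forall n, is_ideal (I n)) ->
    (forall n x, I n x -> I n.+1 x) ->
    exists N, forall n x, (N <= n)%N -> I n x -> I N x.

Definition prime_ideal (P : R -> Prop) : Prop :=
  [/\ is_ideal P, ~ P 1 & forall x y, P (x * y) -> P x \/ P y].

Definition minimal_prime (P : R -> Prop) : Prop :=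
  prime_ideal P /\
  forall Q, prime_ideal Q -> (forall x, Q x -> P x) -> forall x, P x -> Q x.

Definition Rcirc (c : R) : Prop := forall P, minimal_prime P -> ~ P c.

Definition gen_ideal (S : R -> Prop) (r : R) : Prop :=
  exists s : seq (R * R), (forall z, z \in s -> S z.2) /\
    r = \sum_(z <- s) z.1 * z.2.

Definition frob_pow (p : nat) (I : R -> Prop) (e : nat) : R -> Prop :=
  gen_ideal (fun y => exists2 x, I x & y = x ^+ (p ^ e)%N).

Definition frob_cl (p : nat) (I : R -> Prop) (r : R) : Prop :=
  exists n, frob_pow p I n (r ^+ (p ^ n)%N).

Definition tight_cl (p : nat) (I : R -> Prop) (r : R) : Prop :=
  exists2 c, Rcirc c &
    exists e0, forall e, (e0 <= e)%N -> frob_pow p I e (c * r ^+ (p ^ e)%N).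

Definition weak_test_element (p w0 : nat) (c : R) : Prop :=
  Rcirc c /\
  forall b, is_ideal b -> forall r,
    tight_cl p b r <-> (forall n, (w0 <= n)%N -> frob_pow p b n (c * r ^+ (p ^ n)%N)).

(* positive height: every prime containing b has height >= 1
   (vacuous for b = R, which has infinite height) *)
Definition ht_pos (b : R -> Prop) : Prop :=
  forall P, prime_ideal P -> (forall x, b x -> P x) ->
    exists Q, [/\ prime_ideal Q, (forall x, Q x -> P x) & exists x, P x /\ ~ Q x].

Definition Idl : Type := {I : R -> Prop | is_ideal I}.

(* An element of G = (+)_a (+)_n R/(a^[p^n])^F, given by representatives of
   its components g a n; Gel is the ambient type of such families. *)
Definition Gel : Type := Idl -> nat -> R.

Variable p : nat.

Definition Gden (a : Idl) (n : nat) : R -> Prop := frob_cl p (frob_pow p (proj1_sig a) n).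

Definition inG (g : Gel) : Prop :=
  exists l : list (Idl * nat), forall a n, ~ List.In (a, n) l -> Gden a n (g a n).

Definition Gzero (g : Gel) : Prop := forall a n, Gden a n (g a n).

Definition Geq (g h : Gel) : Prop := Gzero (fun a n => g a n - h a n).

(* action of r x^m : component n maps to component n+m, s |-> r s^(p^m) *)
Definition act (r : R) (m : nat) (g : Gel) : Gel :=
  fun a n => if (m <= n)%N then r * g a (n - m)%N ^+ (p ^ m)%N else 0.

(* ann_G (B) for a graded ideal B = (+)_n B n x^n *)
Definition ann_G (B : nat -> R -> Prop) (g : Gel) : Prop :=
  inG g /\ forall n r, B n r -> Gzero (act r n g).

(* (+)_n b_n x^n is a graded two-sided ideal with (b_n) ascending *)
Definition graded_twosided (B : nat -> R -> Prop) : Prop :=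
  [/\ forall n, is_ideal (B n),
      (forall n x, B n x -> B n.+1 x) &
      (forall n x, B n x -> B n.+1 (x ^+ p))].

Definition special_ann (N : Gel -> Prop) : Prop :=
  exists B, graded_twosided B /\ forall g, N g <-> ann_G B g.

(* R[x,f]-submodules of G (saturated w.r.t. equality in G) *)
Definition submodule (N : Gel -> Prop) : Prop :=
  [/\ (forall g, N g -> inG g),
      (forall g h, N g -> inG h -> Geq g h -> N h),
      N (fun _ _ => 0),
      (forall g h, N g -> N h -> N (fun a n => g a n + h a n)) &
      (forall r m g, N g -> N (act r m g))].

(* grann N = (+)_n b x^n *)
Definition grann_is (N : Gel -> Prop) (b : R -> Prop) : Prop :=
  forall n r, (forall g, N g -> Gzero (act r n g)) <-> b r.

Definition IG (b : R -> Prop) : Prop :=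
  is_ideal b /\ exists N, submodule N /\ grann_is N b.

Definition Usub (g : Gel) : Prop :=
  inG g /\ forall a n, tight_cl p (frob_pow p (proj1_sig a) n) (g a n).

End FrobeniusDefs.

From HB Require Import structures.
From mathcomp Require Import all_boot all_order all_algebra.
From Stdlib Require Import Classical ClassicalEpsilon.
From Stdlib Require Import FunctionalExtensionality PropExtensionality.
From mathcomp Require Import ring.
Set Implicit Arguments. Unset Strict Implicit. Unset Printing Implicit Defensive.
Import GRing.Theory.
Local Open Scope ring_scope.

(* If c is a p^w0-weak test element, then r lies in (a^[p^m])^* iff
   c r^(p^n) lies in (a^[p^(m+n)])^F for every n: the Frobenius closure absorbs
   the shift by w0.  The right-hand side says precisely that every c x^n kills
   the class of r in G(a), which gives (i).  For (ii), c lies in b and in R°,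
   so every prime over b is non-minimal.  Conversely, a G-special ideal b' of
   positive height avoids the finitely many minimal primes of the Noetherian
   ring R, so prime avoidance yields d in b' ∩ R°; the computation of (i) with
   d in place of c shows that the submodule N with grann N = b' lies in U, so
   b = grann U ⊆ grann N = b'. *)

Section Ideals.
Variable R : comNzRingType.
Implicit Types (J : R -> Prop) (S : R -> Prop).

Lemma ideal0 J : is_ideal J -> J 0.
Proof. by case. Qed.

Lemma idealD J x y : is_ideal J -> J x -> J y -> J (x + y).
Proof. by case=> _ + _; apply. Qed.

Lemma idealM J r x : is_ideal J -> J x -> J (r * x).
Proof. by case=> _ _; apply. Qed.

Lemma idealN J x : is_ideal J -> J x -> J (- x).
Proof. by move=> J_ideal Jx; rewrite -mulN1r; apply: idealM. Qed.

Lemma ideal_sum J (s : seq (R * R)) : is_ideal J ->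
  (forall z, z \in s -> J z.2) -> J (\sum_(z <- s) z.1 * z.2).
Proof.
move=> J_ideal; elim: s => [|z s IHs] s_J; first by rewrite big_nil; apply: ideal0.
rewrite big_cons; apply: (idealD J_ideal).
- by apply: (idealM _ J_ideal); apply: s_J; rewrite inE eqxx.
- by apply: IHs => w w_s; apply: s_J; rewrite inE w_s orbT.
Qed.

Lemma gen_ideal_is_ideal S : is_ideal (gen_ideal S).
Proof.
split.
- by exists [::]; rewrite big_nil.
- move=> _ _ [s [s_S ->]] [t [t_S ->]]; exists (s ++ t); rewrite big_cat.
  by split=> // z; rewrite mem_cat => /orP[/s_S|/t_S].
- move=> r _ [s [s_S ->]]; exists [seq (r * z.1, z.2) | z <- s]; split.
    by move=> _ /mapP[z /s_S z_S ->].
  by rewrite big_map mulr_sumr; apply: eq_bigr => z _; rewrite mulrA.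
Qed.

Lemma mem_gen_ideal S y : S y -> gen_ideal S y.
Proof.
move=> Sy; exists [:: (1, y)]; rewrite big_seq1 mul1r.
by split=> // z; rewrite inE => /eqP ->.
Qed.

Lemma gen_ideal_min S J : is_ideal J -> (forall y, S y -> J y) ->
  forall x, gen_ideal S x -> J x.
Proof. by move=> J_ideal SJ _ [s [s_S ->]]; apply: ideal_sum => // z /s_S /SJ. Qed.

Lemma gen_ideal_mono S S' : (forall y, S y -> S' y) ->
  forall x, gen_ideal S x -> gen_ideal S' x.
Proof.
move=> SS'; apply: gen_ideal_min; first exact: gen_ideal_is_ideal.
by move=> y /SS'; apply: mem_gen_ideal.
Qed.

Lemma Rcirc1 : Rcirc (1 : R).
Proof. by move=> P [[_ P1 _] _]. Qed.

Lemma RcircM (x y : R) : Rcirc x -> Rcirc y -> Rcirc (x * y).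
Proof.
move=> Rx Ry P P_min; have [[_ _ P_prime] _] := P_min.
by move=> /P_prime[/(Rx P P_min)|/(Ry P P_min)].
Qed.

Lemma RcircX (x : R) n : Rcirc x -> Rcirc (x ^+ n).
Proof.
move=> Rx; elim: n => [|n IHn]; first by rewrite expr0; apply: Rcirc1.
by rewrite exprS; apply: RcircM.
Qed.

End Ideals.

Section Frobenius.
Variables (R : comNzRingType) (p : nat).
Hypothesis pcharRp : p \in [pchar R].
Implicit Types (I J : R -> Prop) (g h : Gel R).

Lemma pchar_gt0 : (0 < p)%N.
Proof. exact: prime_gt0 (pcharf_prime pcharRp). Qed.

Lemma frobD k (x y : R) : (x + y) ^+ (p ^ k) = x ^+ (p ^ k) + y ^+ (p ^ k).
Proof.
by apply: exprDn_pchar; rewrite pnatX (pnatE _ (pcharf_prime pcharRp)) pcharRp.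
Qed.

Lemma frob0 k : (0 : R) ^+ (p ^ k) = 0.
Proof. by rewrite expr0n gtn_eqF // expn_gt0 pchar_gt0. Qed.

Lemma frobX m n (x : R) : (x ^+ (p ^ m)) ^+ (p ^ n) = x ^+ (p ^ (m + n)).
Proof. by rewrite -exprM expnD. Qed.

Lemma frob_sum k (s : seq (R * R)) :
  (\sum_(z <- s) z.1 * z.2) ^+ (p ^ k) =
  \sum_(z <- s) z.1 ^+ (p ^ k) * z.2 ^+ (p ^ k).
Proof.
rewrite (big_morph (fun x => x ^+ (p ^ k)) (frobD k) (frob0 k)).
by apply: eq_bigr => z _; rewrite exprMn.
Qed.

Lemma gen_ideal_frob (S : R -> Prop) k x : gen_ideal S x ->
  gen_ideal (fun y => exists2 s, S s & y = s ^+ (p ^ k)) (x ^+ (p ^ k)).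
Proof.
move=> [s [s_S ->]]; rewrite frob_sum.
exists [seq (z.1 ^+ (p ^ k), z.2 ^+ (p ^ k)) | z <- s]; rewrite big_map.
by split=> // _ /mapP[z /s_S z_S ->]; exists z.2.
Qed.

Lemma frob_pow_is_ideal I e : is_ideal (frob_pow p I e).
Proof. exact: gen_ideal_is_ideal. Qed.

Lemma frob_pow_expr I e x : I x -> frob_pow p I e (x ^+ (p ^ e)).
Proof. by move=> Ix; apply: mem_gen_ideal; exists x. Qed.

Lemma frob_powD I m n x :
  frob_pow p (frob_pow p I m) n x <-> frob_pow p I (m + n) x.
Proof.
split.
- apply: gen_ideal_min; first exact: frob_pow_is_ideal.
  move=> _ [y Iy ->]; apply: gen_ideal_mono (gen_ideal_frob n Iy).
  by move=> _ [s [u Iu ->] ->]; exists u; rewrite // frobX.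
- apply: gen_ideal_mono => _ [u Iu ->].
  by exists (u ^+ (p ^ m)); [apply: frob_pow_expr | rewrite frobX].
Qed.

Lemma frob_pow_frob I m n y :
  frob_pow p I m y -> frob_pow p I (m + n) (y ^+ (p ^ n)).
Proof. by move=> Iy; apply/frob_powD; apply: frob_pow_expr. Qed.

Lemma frob_cl_is_ideal J : is_ideal (frob_cl p J).
Proof.
split.
- by exists 0%N; rewrite frob0; apply: ideal0 (frob_pow_is_ideal _ _).
- move=> x y [m Jx] [n Jy]; exists (m + n)%N; rewrite frobD.
  apply: idealD (frob_pow_is_ideal _ _) _ _.
  + by rewrite -frobX; apply: frob_pow_frob.
  + by rewrite addnC -frobX; apply: frob_pow_frob.
- move=> r x [n Jx]; exists n; rewrite exprMn.
  exact: idealM (frob_pow_is_ideal _ _) Jx.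
Qed.

Lemma frob_cl_shift I j m z : frob_cl p (frob_pow p I j) z ->
  frob_cl p (frob_pow p I (j + m)) (z ^+ (p ^ m)).
Proof.
move=> [n /frob_powD /(frob_pow_frob m) Iz]; exists n; apply/frob_powD.
have -> : (z ^+ (p ^ m)) ^+ (p ^ n) = (z ^+ (p ^ n)) ^+ (p ^ m).
  by rewrite !frobX addnC.
by rewrite addnAC.
Qed.

Lemma tight_cl_is_ideal J : is_ideal (tight_cl p J).
Proof.
split.
- exists 1; first exact: Rcirc1.
  by exists 0%N => e _; rewrite frob0 mulr0; apply: ideal0 (frob_pow_is_ideal _ _).
- move=> x y [c Rc [e1 cx]] [d Rd [e2 dy]].
  exists (c * d); first exact: RcircM.
  exists (maxn e1 e2) => e; rewrite geq_max => /andP[le1 le2].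
  rewrite frobD mulrDr; apply: idealD (frob_pow_is_ideal _ _) _ _.
  + by rewrite [c * d]mulrC -mulrA; apply: idealM (frob_pow_is_ideal _ _) (cx e le1).
  + by rewrite -mulrA; apply: idealM (frob_pow_is_ideal _ _) (dy e le2).
- move=> r x [c Rc [e0 cx]]; exists c => //; exists e0 => e le0.
  rewrite exprMn mulrCA; exact: idealM (frob_pow_is_ideal _ _) (cx e le0).
Qed.

Lemma frob_cl_sub_tight_cl J z : frob_cl p J z -> tight_cl p J z.
Proof.
move=> [n Jz]; exists 1; first exact: Rcirc1.
exists n => e le_ne; rewrite mul1r -(subnKC le_ne) -frobX.
exact: frob_pow_frob.
Qed.

Lemma tight_cl_shift I j m z : tight_cl p (frob_pow p I j) z ->
  tight_cl p (frob_pow p I (j + m)) (z ^+ (p ^ m)).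
Proof.
move=> [d Rd [e0 dz]]; exists d => //; exists e0 => e le0.
have /frob_powD := dz (m + e)%N (leq_trans le0 (leq_addl _ _)).
by rewrite frobX addnA => /frob_powD.
Qed.

Lemma act_0 r g a k : act p r 0 g a k = r * g a k.
Proof. by rewrite /act leq0n subn0 expn0 expr1. Qed.

Lemma act_shift r n g a m : act p r n g a (m + n) = r * g a m ^+ (p ^ n).
Proof. by rewrite /act leq_addl addnK. Qed.

Lemma inG0 : inG p (fun _ _ => 0 : R).
Proof. by exists [::] => a n _; apply: ideal0 (frob_cl_is_ideal _). Qed.

Lemma inG_add g h : inG p g -> inG p h -> inG p (fun a n => g a n + h a n).
Proof.
move=> [l gl] [l' hl']; exists (l ++ l') => a n not_in.
apply: idealD (frob_cl_is_ideal _) _ _.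
- by apply: gl => in_l; apply: not_in; apply: List.in_or_app; left.
- by apply: hl' => in_l'; apply: not_in; apply: List.in_or_app; right.
Qed.

Lemma inG_act r m g : inG p g -> inG p (act p r m g).
Proof.
move=> [l gl]; pose shift (z : Idl R * nat) := (z.1, (z.2 + m)%N).
exists (List.map shift l) => a k not_in; rewrite /act.
case: leqP => le_mk; last exact: ideal0 (frob_cl_is_ideal _).
apply: idealM (frob_cl_is_ideal _) _.
have not_in' : ~ List.In (a, (k - m)%N) l.
  by move=> /(List.in_map shift); rewrite /shift /= subnK.
by have := frob_cl_shift m (gl _ _ not_in'); rewrite subnK.
Qed.

Lemma Usub_submodule : submodule p (@Usub R p).
Proof.
split.
- by move=> g [].
- move=> g h [_ Ug] inGh gh; split=> // a n.
  rewrite -[h a n](subKr (g a n)); apply: idealD (tight_cl_is_ideal _) (Ug a n) _.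
  exact/(idealN (tight_cl_is_ideal _))/frob_cl_sub_tight_cl/gh.
- by split; [apply: inG0 | move=> a n; apply: ideal0 (tight_cl_is_ideal _)].
- move=> g h [inGg Ug] [inGh Uh]; split; first exact: inG_add.
  by move=> a n; apply: idealD (tight_cl_is_ideal _) (Ug a n) (Uh a n).
- move=> r m g [inGg Ug]; split; first exact: inG_act.
  move=> a k; rewrite /act; case: leqP => le_mk.
  + apply: idealM (tight_cl_is_ideal _) _.
    by have := tight_cl_shift m (Ug a (k - m)%N); rewrite subnK.
  + exact: ideal0 (tight_cl_is_ideal _).
Qed.

Lemma grann_is_ideal (N : Gel R -> Prop) b : grann_is p N b -> is_ideal b.
Proof.
move=> grann_b.
have mem_b r : (forall g, N g -> forall a k, Gden p a k (r * g a k)) -> b r.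
  by move=> Nr; apply/(grann_b 0%N r) => g Ng a k; rewrite act_0; apply: Nr.
have b_kills r : b r -> forall g, N g -> forall a k, Gden p a k (r * g a k).
  by move=> /(grann_b 0%N r) Nr g Ng a k; rewrite -act_0; apply: Nr.
split.
- by apply: mem_b => g _ a k; rewrite mul0r; apply: ideal0 (frob_cl_is_ideal _).
- move=> x y /b_kills Nx /b_kills Ny; apply: mem_b => g Ng a k; rewrite mulrDl.
  exact: idealD (frob_cl_is_ideal _) (Nx g Ng a k) (Ny g Ng a k).
- move=> r x /b_kills Nx; apply: mem_b => g Ng a k; rewrite -mulrA.
  exact: idealM (frob_cl_is_ideal _) (Nx g Ng a k).
Qed.

Lemma grann_is_anti (N M : Gel R -> Prop) b b' : (forall g, N g -> M g) ->
  grann_is p M b -> grann_is p N b' -> forall x, b x -> b' x.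
Proof.
move=> NM grann_b grann_b' x bx; apply/(grann_b' 0%N x) => g Ng.
exact: (grann_b 0%N x).2 bx g (NM g Ng).
Qed.

Definition graded_principal (c : R) (n : nat) (r : R) : Prop := exists s, r = s * c.

Lemma graded_principal_id c n : graded_principal c n c.
Proof. by exists 1; rewrite mul1r. Qed.

Lemma graded_principal_twosided c : graded_twosided p (graded_principal c).
Proof.
split.
- move=> n; split; first by exists 0; rewrite mul0r.
    by move=> _ _ [s ->] [t ->]; exists (s + t); rewrite mulrDl.
  by move=> r _ [s ->]; exists (r * s); rewrite mulrA.
- by move=> n x.
- move=> n _ [s ->]; exists (s ^+ p * c ^+ p.-1).
  by rewrite exprMn -mulrA -exprSr prednK // pchar_gt0.
Qed.

Section TestElement.
Variables (c : R) (w0 : nat).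
Hypothesis c_test : weak_test_element p w0 c.

(* (c r^(p^n))^(p^w0) is a multiple of c r^(p^(n+w0)), which the test element
   puts in (a^[p^m])^[p^(n+w0)] = (a^[p^(m+n)])^[p^w0]. *)
Lemma frob_cl_test_mul I m r : tight_cl p (frob_pow p I m) r ->
  forall n, frob_cl p (frob_pow p I (m + n)) (c * r ^+ (p ^ n)).
Proof.
move=> r_tight n; exists w0.
have /frob_powD := (c_test.2 _ (frob_pow_is_ideal I m) r).1 r_tight (n + w0)%N
  (leq_addl _ _).
rewrite addnA => /frob_powD cr.
have q_gt0 : (0 < p ^ w0)%N by rewrite expn_gt0 pchar_gt0.
rewrite exprMn frobX -(prednK q_gt0) exprSr -mulrA.
exact: idealM (frob_pow_is_ideal _ _) cr.
Qed.

Lemma tight_cl_of_frob_cl I m r d : Rcirc d ->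
  (forall n, frob_cl p (frob_pow p I (m + n)) (d * r ^+ (p ^ n))) ->
  tight_cl p (frob_pow p I m) r.
Proof.
move=> Rd dr; exists (c * d ^+ (p ^ w0)).
  by apply: RcircM; [case: c_test | apply: RcircX].
exists w0 => e le_w0e.
have dr_tight := frob_cl_sub_tight_cl (dr (e - w0)%N).
have /frob_powD := (c_test.2 _ (frob_pow_is_ideal _ _) _).1 dr_tight w0 (leqnn _).
rewrite -addnA subnK // => /frob_powD.
by rewrite exprMn frobX subnK // mulrA.
Qed.

Lemma Usub_ann g : Usub p g <-> ann_G p (graded_principal c) g.
Proof.
split=> [[inGg Ug] | [inGg ann_g]]; split=> //.
- move=> n r [s ->] a k; rewrite /act; case: leqP => le_nk.
  + rewrite -mulrA; apply: idealM (frob_cl_is_ideal _) _.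
    by have := frob_cl_test_mul (Ug a (k - n)%N) n; rewrite subnK.
  + exact: ideal0 (frob_cl_is_ideal _).
- move=> a m; apply: (tight_cl_of_frob_cl c_test.1) => n.
  by have := ann_g n c (graded_principal_id c n) a (m + n)%N; rewrite act_shift.
Qed.

Lemma Usub_special : special_ann p (@Usub R p).
Proof.
exists (graded_principal c); split; first exact: graded_principal_twosided.
exact: Usub_ann.
Qed.

Lemma grann_Usub_test b : grann_is p (@Usub R p) b -> b c.
Proof.
move=> grann_b; apply/(grann_b 0%N c) => g /Usub_ann[_ ann_g].
exact: ann_g 0%N c (graded_principal_id c 0).
Qed.

Lemma submodule_sub_Usub (N : Gel R -> Prop) b d : submodule p N ->
  grann_is p N b -> b d -> Rcirc d -> forall g, N g -> Usub p g.
Proof.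
move=> [N_inG _ _ _ _] grann_b bd Rd g Ng; split; first exact: N_inG.
move=> a m; apply: (tight_cl_of_frob_cl Rd) => n.
by have := (grann_b n d).2 bd g Ng a (m + n)%N; rewrite act_shift.
Qed.

End TestElement.

End Frobenius.

Section Noetherian.
Variable R : comNzRingType.
Implicit Types (I J P Q : R -> Prop).

Lemma noetherian_ind (C : (R -> Prop) -> Prop) : noetherian R ->
  (forall I, is_ideal I -> ~ C I -> exists J,
     [/\ is_ideal J, ~ C J, forall x, I x -> J x & exists x, J x /\ ~ I x]) ->
  forall I, is_ideal I -> C I.
Proof.
move=> noethR grow I0 I0_ideal; apply: NNPP => not_C0.
pose bad := {I : R -> Prop | is_ideal I /\ ~ C I}.
have grow_bad (u : bad) : exists v : bad,
    (forall x, sval u x -> sval v x) /\ exists x, sval v x /\ ~ sval u x.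
  case: u => I [I_ideal not_CI] /=.
  have [J [J_ideal not_CJ IJ JI]] := grow I I_ideal not_CI.
  by exists (exist _ J (conj J_ideal not_CJ)).
pose next (u : bad) := sval (constructive_indefinite_description _ (grow_bad u)).
have next_spec u := svalP (constructive_indefinite_description _ (grow_bad u)).
pose u0 : bad := exist _ I0 (conj I0_ideal not_C0).
pose chain n := sval (iter n next u0).
have [n stable] := noethR chain (fun n => (svalP (iter n next u0)).1)
  (fun n => (next_spec (iter n next u0)).1).
have [x [x_next not_x]] := (next_spec (iter n next u0)).2.
exact: not_x (stable n.+1 x (leqnSn n) x_next).
Qed.

Definition adjoin I a z : Prop := exists i r, I i /\ z = i + r * a.

Lemma adjoin_is_ideal I a : is_ideal I -> is_ideal (adjoin I a).
Proof.
move=> I_ideal; split.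
- by exists 0, 0; rewrite mul0r addr0; split=> //; apply: ideal0.
- move=> _ _ [i [r [Ii ->]]] [j [s [Ij ->]]]; exists (i + j), (r + s).
  by rewrite mulrDl addrACA; split=> //; apply: idealD.
- move=> r _ [i [s [Ii ->]]]; exists (r * i), (r * s).
  by rewrite mulrDr mulrA; split=> //; apply: idealM.
Qed.

Lemma adjoin_sub I a x : I x -> adjoin I a x.
Proof. by move=> Ix; exists x, 0; rewrite mul0r addr0. Qed.

Lemma adjoin_mem I a : is_ideal I -> adjoin I a a.
Proof. by move=> I_ideal; exists 0, 1; rewrite mul1r add0r; split=> //; apply: ideal0. Qed.

Definition prime_cover I : Prop := exists Ps : list (R -> Prop),
  (forall Q, List.In Q Ps -> prime_ideal Q /\ forall x, I x -> Q x) /\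
  forall x, (forall Q, List.In Q Ps -> Q x) -> exists n, I (x ^+ n).

Lemma prime_cover_adjoin I a b : is_ideal I -> I (a * b) ->
  prime_cover (adjoin I a) -> prime_cover (adjoin I b) -> prime_cover I.
Proof.
move=> I_ideal Iab [Ps [Ps_over Ps_rad]] [Qs [Qs_over Qs_rad]].
exists (Ps ++ Qs); split.
  move=> Q /(List.in_app_or Ps Qs Q)[/Ps_over|/Qs_over] [Q_prime IQ];
    by split=> // x Ix; apply/IQ/adjoin_sub.
move=> x x_in.
have [n [i [r [Ii xn]]]] :=
  Ps_rad x (fun Q Q_in => x_in Q (List.in_or_app _ _ _ (or_introl Q_in))).
have [m [j [s [Ij xm]]]] :=
  Qs_rad x (fun Q Q_in => x_in Q (List.in_or_app _ _ _ (or_intror Q_in))).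
exists (n + m)%N; rewrite exprD xn xm.
have -> : (i + r * a) * (j + s * b) =
    (j + s * b) * i + (r * a) * j + (r * s) * (a * b) by ring.
apply: (idealD I_ideal); last exact: idealM.
by apply: (idealD I_ideal); apply: idealM.
Qed.

Lemma prime_cover_grow I : is_ideal I -> ~ prime_cover I -> exists J,
  [/\ is_ideal J, ~ prime_cover J, forall x, I x -> J x & exists x, J x /\ ~ I x].
Proof.
move=> I_ideal no_cover.
have I_proper : ~ I 1.
  by move=> I1; apply: no_cover; exists [::]; split=> // x _; exists 0%N; rewrite expr0.
have [a [b [Iab Ia Ib]]] : exists a b, [/\ I (a * b), ~ I a & ~ I b].
  apply: NNPP => none; apply: no_cover; exists [:: I]; split.
  - move=> Q [<-|[]]; split=> //; split=> // x y Ixy.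
    by apply: NNPP => nxy; apply: none; exists x, y; split=> // ?; apply: nxy; [left|right].
  - by move=> x x_in; exists 1%N; rewrite expr1; apply: x_in; left.
suff [z [Iz no_cover_z]] : exists z, ~ I z /\ ~ prime_cover (adjoin I z).
  exists (adjoin I z); split=> //; first exact: adjoin_is_ideal.
    exact: adjoin_sub.
  by exists z; split=> //; apply: adjoin_mem.
apply: NNPP => none; apply: no_cover; apply: (prime_cover_adjoin I_ideal Iab).
- by apply: NNPP => no_cover_a; apply: none; exists a.
- by apply: NNPP => no_cover_b; apply: none; exists b.
Qed.

Lemma nilradical_prime_cover : noetherian R -> exists Ps : list (R -> Prop),
  (forall Q, List.In Q Ps -> prime_ideal Q) /\
  forall x, (forall Q, List.In Q Ps -> Q x) -> exists n, x ^+ n = 0.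
Proof.
move=> noethR; have zero_ideal : is_ideal (fun x : R => x = 0).
  by split=> [|x y -> ->|r x ->]; rewrite ?addr0 ?mulr0.
have [Ps [Ps_prime Ps_nil]] :=
  noetherian_ind noethR (@prime_cover_grow) zero_ideal.
by exists Ps; split=> // Q /Ps_prime[].
Qed.

Lemma prime_ideal_expr P x n : prime_ideal P -> P (x ^+ n) -> P x.
Proof.
move=> [_ P1 P_prime]; elim: n => [|n IHn]; first by rewrite expr0.
by rewrite exprS => /P_prime[].
Qed.

Lemma prime_avoid_prod P (C : (R -> Prop) -> Prop) (Qs : list (R -> Prop)) :
  prime_ideal P ->
  (forall Q, List.In Q Qs -> C Q -> is_ideal Q /\ exists x, Q x /\ ~ P x) ->
  exists w, ~ P w /\ forall Q, List.In Q Qs -> C Q -> Q w.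
Proof.
move=> P_prime; elim: Qs => [|Q Qs IHQs] Qs_out.
  by exists 1; split=> //; case: P_prime.
have [w [Pw w_in]] := IHQs (fun Q' Q'_in => Qs_out Q' (or_intror Q'_in)).
have [CQ|not_CQ] := classic (C Q); last first.
  by exists w; split=> // Q' [<-|/w_in].
have [Q_ideal [x [Qx Px]]] := Qs_out Q (or_introl erefl) CQ.
exists (w * x); split; first by have [_ _ P_mul] := P_prime; move=> /P_mul[].
move=> Q' [<-|Q'_in] CQ'; first exact: idealM.
have [Q'_ideal _] := Qs_out Q' (or_intror Q'_in) CQ'.
by rewrite mulrC; apply: idealM Q'_ideal (w_in Q' Q'_in CQ').
Qed.

Lemma minimal_prime_in (Ps : list (R -> Prop)) P :
  (forall Q, List.In Q Ps -> prime_ideal Q) ->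
  (forall x, (forall Q, List.In Q Ps -> Q x) -> exists n, x ^+ n = 0) ->
  minimal_prime P -> List.In P Ps.
Proof.
move=> Ps_prime Ps_nil [P_prime P_min].
suff [Q [Q_in QP]] : exists Q, List.In Q Ps /\ forall x, Q x -> P x.
  suff -> : P = Q by [].
  apply: functional_extensionality => x; apply: propositional_extensionality.
  by split; [apply: P_min Q (Ps_prime Q Q_in) QP x | apply: QP].
apply: NNPP => none.
have [w [Pw w_in]] : exists w, ~ P w /\ forall Q, List.In Q Ps -> True -> Q w.
  apply: (prime_avoid_prod (C := fun _ => True)) => // Q Q_in _.
  split; first by case: (Ps_prime Q Q_in).
  apply: NNPP => QP; apply: none; exists Q; split=> // x Qx.
  by apply: NNPP => Px; apply: QP; exists x.
have [n wn0] := Ps_nil w (fun Q Q_in => w_in Q Q_in I).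
by apply/Pw/(prime_ideal_expr (n := n) P_prime); rewrite wn0; case: P_prime => [[]].
Qed.

Lemma minimal_primes_avoid (Qs : list (R -> Prop)) J : is_ideal J ->
  (forall P, minimal_prime P -> exists y, J y /\ ~ P y) ->
  exists x, J x /\ forall Q, List.In Q Qs -> minimal_prime Q -> ~ Q x.
Proof.
move=> J_ideal J_avoids; elim: Qs => [|Q Qs [x [Jx x_avoids]]].
  by exists 0; split=> //; apply: ideal0.
have [[Q_min Qx]|not_Qx] := classic (minimal_prime Q /\ Q x); last first.
  by exists x; split=> // Q' [<-|/x_avoids] // Q_min Qx; apply: not_Qx.
have [[Q_ideal _ Q_prime] Q_least] := Q_min.
(* As x lies in Q but in no minimal Q' of Qs, no such Q' is contained in Q; so
   some w outside Q lies in all of them, and x + w z works for z in J \ Q. *)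
have [w [Qw w_in]] :
    exists w, ~ Q w /\ forall Q', List.In Q' Qs -> minimal_prime Q' -> Q' w.
  apply: (prime_avoid_prod (C := @minimal_prime R)) => [|Q' Q'_in Q'_min].
    exact: Q_min.1.
  split; first by case: Q'_min.1.
  apply: NNPP => Q'Q; apply: (x_avoids Q' Q'_in Q'_min).
  apply: (Q_least Q' Q'_min.1) => // y Q'y.
  by apply: NNPP => Qy; apply: Q'Q; exists y.
have [z [Jz Qz]] := J_avoids Q Q_min.
exists (x + w * z); split; first by apply: idealD => //; apply: idealM.
move=> Q' [<-|Q'_in] Q'_min Q'xwz.
- have : Q (w * z).
    by rewrite -(addKr x (w * z)); apply: idealD Q_ideal (idealN Q_ideal Qx) Q'xwz.
  by move=> /Q_prime[].
- have [[Q'_ideal _ _] _] := Q'_min.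
  have Q'wz : Q' (w * z) by rewrite mulrC; apply: (idealM _ Q'_ideal); apply: w_in.
  apply: (x_avoids Q' Q'_in Q'_min).
  by rewrite -(addrK (w * z) x); apply: idealD Q'_ideal Q'xwz (idealN Q'_ideal Q'wz).
Qed.

Lemma Rcirc_mem_ht_pos J : noetherian R -> is_ideal J -> ht_pos J ->
  exists x, J x /\ Rcirc x.
Proof.
move=> noethR J_ideal J_ht.
have [Ps [Ps_prime Ps_nil]] := nilradical_prime_cover noethR.
have J_avoids P : minimal_prime P -> exists y, J y /\ ~ P y.
  move=> [P_prime P_min]; apply: NNPP => JP.
  have JsubP y : J y -> P y by move=> Jy; apply: NNPP => Py; apply: JP; exists y.
  have [Q [Q_prime QP [x [Px Qx]]]] := J_ht P P_prime JsubP.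
  exact: Qx (P_min Q Q_prime QP x Px).
have [x [Jx x_avoids]] := minimal_primes_avoid Ps J_ideal J_avoids.
exists x; split=> // P P_min.
exact: x_avoids P (minimal_prime_in Ps_prime Ps_nil P_min) P_min.
Qed.

Lemma Rcirc_ht_pos b (c : R) : b c -> Rcirc c -> ht_pos b.
Proof.
move=> bc Rc P P_prime bP; apply: NNPP => P_low.
apply: (Rc P) (bP c bc); split=> // Q Q_prime QP x Px.
by apply: NNPP => Qx; apply: P_low; exists Q; split=> //; exists x.
Qed.

End Noetherian.

Theorem theorem2p7 (R : comNzRingType) (p : nat) (c : R) (w0 : nat) :
  prime p -> p \in [pchar R] -> noetherian R -> weak_test_element p w0 c ->
  ((forall g, @Usub R p g <-> ann_G p (fun n r => exists s, r = s * c) g)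
     /\ special_ann p (@Usub R p))
  /\
  (forall b : R -> Prop, grann_is p (@Usub R p) b ->
     [/\ IG p b, ht_pos b &
         forall b', IG p b' -> ht_pos b' -> forall x, b x -> b' x]).
Proof.
move=> _ pcharRp noethR c_test; split.
  by split; [exact: (Usub_ann pcharRp c_test) | exact: (Usub_special pcharRp c_test)].
move=> b grann_b; have b_c := grann_Usub_test pcharRp c_test grann_b.
split.
- split; first exact: grann_is_ideal grann_b.
  by exists (@Usub R p); split=> //; apply: Usub_submodule.
- exact: Rcirc_ht_pos b_c c_test.1.
- move=> b' [b'_ideal [N [N_sub grann_b']]] ht_b'.
  have [d [b'_d Rd]] := Rcirc_mem_ht_pos noethR b'_ideal ht_b'.
  have NU := submodule_sub_Usub pcharRp c_test N_sub grann_b' b'_d Rd.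
  exact: grann_is_anti NU grann_b grann_b'.
Qed.
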